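(* Let $p$ be a prime, let $G$ be a direct sum of cyclic $p$-groups and $U\subseteq G$ a subgroup with $p(G/U)=0$. Fix a decomposition of $G$ into cyclic summands and let $T_n$ ($n\ge1$) be the direct sum of all summands of order $p^n$ in it, so $G=\bigoplus_{n\ge1}T_n$; put $G_0=0$, $G_n=\bigoplus_{\ell\le n}T_\ell$ and $U_n=U\cap G_n$. Then for every $n\ge1$ there are subgroups $D\subseteq G_n$ and $E\subseteq D$ with $G_n=G_{n-1}\oplus D$ and $U_n=U_{n-1}\oplus E$, and the pair $(D,E)$ is isomorphic to the direct sum of $\mu^n_n$ copies of $P^n_n=(\mathbb Z/(p^n),\mathbb Z/(p^n))$ and $\mu^n_{n-1}$ copies of $P^n_{n-1}=(\mathbb Z/(p^n),p\mathbb Z/(p^n))$, where $$\mu^n_n=\dim_{\mathbb F_p}\frac{G_{n-1}+U_n}{G_{n-1}+pG_n},\qquad \mu^n_{n-1}=\dim_{\mathbb F_p}\frac{G_n}{G_{n-1}+U_n}.$$ Consequently $(G,U)\cong\bigoplus_{n\ge1}\big[(P^n_n)^{(\mu^n_n)}\oplus(P^n_{n-1})^{(\mu^n_{n-1})}\big]$.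
   Context: A pair $(G,U)$ consists of an abelian group $G$ and a subgroup $U$; isomorphisms of pairs are group isomorphisms $f:G\to G'$ with $f(U)=U'$, and direct sums of pairs are taken componentwise. $(P)^{(\mu)}$ denotes the direct sum of $\mu$ copies of $P$ ($\mu$ a cardinal). *)

From mathcomp Require Import all_boot all_order all_algebra.
From Stdlib Require List.

Set Implicit Arguments.
Unset Strict Implicit.
Unset Printing Implicit Defensive.

Import GRing.Theory.
Local Open Scope ring_scope.

Definition is_subgroup (G : zmodType) (A : G -> Prop) : Prop :=
  A 0 /\ (forall x y, A x -> A y -> A (x - y)).

Definition addS (G : zmodType) (A B : G -> Prop) : G -> Prop :=
  fun x => exists a b, A a /\ B b /\ x = a + b.

Definition pmulS (G : zmodType) (p : nat) (A : G -> Prop) : G -> Prop :=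
  fun x => exists a, A a /\ x = a *+ p.

Definition int_dsum (G : zmodType) (S A B : G -> Prop) : Prop :=
  is_subgroup A /\ is_subgroup B /\
  (forall x, S x <-> addS A B x) /\ (forall x, A x -> B x -> x = 0).

(* Elements of the external direct sum  (+)_{k in K} Z/(p^(lev k)):
   dependent functions with finite support. *)
Definition fsupp (p : nat) (K : Type) (lev : K -> nat)
  (g : forall k : K, 'Z_(p ^ lev k)%N) : Prop :=
  exists s : seq K, forall k, g k <> 0 -> List.In k s.

(* f is an isomorphism of pairs from (A, B) (A, B subgroups of G) onto the
   standard pair  (+)_{k in K} (Z/(p^(lev k)), S_k), where S_k = Z/(p^(lev k))
   if full k, and S_k = p Z/(p^(lev k)) otherwise. *)
Definition pair_iso_via (G : zmodType) (A B : G -> Prop) (p : nat) (K : Type)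
  (lev : K -> nat) (full : K -> bool)
  (f : G -> forall k : K, 'Z_(p ^ lev k)%N) : Prop :=
  (forall x, B x -> A x) /\
  (forall x y, A x -> A y -> f (x + y) = (fun k => f x k + f y k)) /\
  (forall x y, A x -> A y -> f x = f y -> x = y) /\
  (forall x, A x -> @fsupp p K lev (f x)) /\
  (forall g, @fsupp p K lev g -> exists x, A x /\ f x = g) /\
  (forall x, A x -> (B x <-> forall k, ~~ full k -> (p %| f x k)%N)).

Definition pair_iso (G : zmodType) (A B : G -> Prop) (p : nat) (K : Type)
  (lev : K -> nat) (full : K -> bool) : Prop :=
  exists f, @pair_iso_via G A B p K lev full f.

(* A fixed decomposition of G into cyclic summands of orders p^(e i), e i >= 1,
   given by an isomorphism phi : G ~ (+)_{i in I} Z/(p^(e i)). *)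
Definition cyclic_decomp (G : zmodType) (p : nat) (I : Type) (e : I -> nat)
  (phi : G -> forall i : I, 'Z_(p ^ e i)%N) : Prop :=
  (forall i, (0 < e i)%N) /\
  @pair_iso_via G (fun _ : G => True) (fun _ : G => True) p I e (fun _ => true) phi.

(* G_n = (+)_{l <= n} T_l  w.r.t. the decomposition phi. *)
Definition Gn (G : zmodType) (p : nat) (I : Type) (e : I -> nat)
  (phi : G -> forall i : I, 'Z_(p ^ e i)%N) (n : nat) : G -> Prop :=
  fun x => forall i, (n < e i)%N -> phi x i = 0.

(* dim_{F_p} (N / M) = |J|: the quotient N/M has an F_p-basis indexed by J,
   i.e. there is a family b : J -> N whose images mod M are F_p-linearly
   independent and span N/M. *)
Definition Fp_dim (G : zmodType) (p : nat) (N M : G -> Prop) (J : Type) : Prop :=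
  exists b : J -> G,
    (forall j, N (b j)) /\
    (forall (s : seq J) (c : J -> nat), List.NoDup s ->
       M (\sum_(j <- s) b j *+ c j) -> forall j, List.In j s -> (p %| c j)%N) /\
    (forall x, N x -> exists (s : seq J) (c : J -> nat),
       M (x - \sum_(j <- s) b j *+ c j)).

From mathcomp Require Import all_boot all_order all_algebra.
From mathcomp Require Import boolp classical_sets.
From Stdlib Require FinFun.

Set Implicit Arguments.
Unset Strict Implicit.
Unset Printing Implicit Defensive.

Import GRing.Theory.
Local Open Scope ring_scope.

(* Fix a level n and put N = G_(n-1) + U_n, M = G_(n-1) + p G_n.  Since
   p G ⊆ U, both N / M and G_n / N are F_p-vector spaces; choose bases (b1_j)
   and (b2_j).  Each b1_j may be replaced by its U_n-component u_j.  The
   family (u_j) ∪ (b2_j) then behaves like a basis of the homocyclic group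
   G_n / G_(n-1) of exponent p^n: it spans G_n modulo M, hence modulo
   G_(n-1) because p^n G_n = 0, and a combination lying in G_(n-1) has all
   coefficients divisible by p^n, because an element w of G_n with
   p^k w ∈ G_(n-1) for some k < n already lies in M.  Reading off coordinates
   along this family identifies any complement D of G_(n-1) in G_n with a
   direct sum of copies of Z/(p^n), one for each u_j and each b2_j, and an
   element of D lies in U exactly when its coordinates along the b2_j are
   divisible by p.  Gluing the families of all levels gives a basis of G
   along which U is described in the same way, by induction on the highest
   level occurring in a combination. *)

Section Subgroup.
Variables (G : zmodType) (A : G -> Prop).
Hypothesis sgA : is_subgroup A.

Lemma subg0 : A 0. Proof. by case: sgA. Qed.

Lemma subgB x y : A x -> A y -> A (x - y). Proof. by case: sgA => _; apply. Qed.

Lemma subgN x : A x -> A (- x).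
Proof. by move=> Ax; rewrite -sub0r; exact: subgB subg0 Ax. Qed.

Lemma subgD x y : A x -> A y -> A (x + y).
Proof. by move=> Ax Ay; rewrite -[y]opprK; exact: subgB Ax (subgN Ay). Qed.

Lemma subgMn x m : A x -> A (x *+ m).
Proof.
move=> Ax; elim: m => [|m IH]; first by rewrite mulr0n; exact: subg0.
by rewrite mulrS; exact: subgD.
Qed.

Lemma subg_sum (J : Type) (r : seq J) (F : J -> G) :
  (forall j, List.In j r -> A (F j)) -> A (\sum_(j <- r) F j).
Proof.
elim: r => [|j r IH] AF; first by rewrite big_nil; exact: subg0.
by rewrite big_cons; apply: subgD; [apply: AF; left | apply: IH => i ir; apply: AF; right].
Qed.

Lemma subg_sumT (J : Type) (r : seq J) (F : J -> G) :
  (forall j, A (F j)) -> A (\sum_(j <- r) F j).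
Proof. by move=> AF; apply: subg_sum. Qed.

End Subgroup.

Section SubgroupConstructions.
Variables (G : zmodType) (A B : G -> Prop).

Lemma subgroup0 : is_subgroup (fun x : G => x = 0).
Proof. by split=> // x y -> ->; rewrite subrr. Qed.

Lemma subgroupT : is_subgroup (fun _ : G => True). Proof. by []. Qed.

Lemma subgroupI : is_subgroup A -> is_subgroup B -> is_subgroup (fun x => A x /\ B x).
Proof.
move=> sgA sgB; split; first by split; [exact: subg0 sgA | exact: subg0 sgB].
by move=> x y [Ax Bx] [Ay By]; split; [exact: subgB | exact: subgB].
Qed.

Lemma addS_subgroup : is_subgroup A -> is_subgroup B -> is_subgroup (addS A B).
Proof.
move=> sgA sgB; split; first by exists 0, 0; rewrite addr0; do !split; exact: subg0.
move=> _ _ [a [b [Aa [Bb ->]]]] [a' [b' [Aa' [Bb' ->]]]].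
exists (a - a'), (b - b'); do !split; [exact: subgB | exact: subgB |].
by rewrite opprD addrACA.
Qed.

Lemma addS_l x : is_subgroup B -> A x -> addS A B x.
Proof. by move=> sgB Ax; exists x, 0; rewrite addr0; do !split => //; exact: subg0. Qed.

Lemma addS_r x : is_subgroup A -> B x -> addS A B x.
Proof. by move=> sgA Bx; exists 0, x; rewrite add0r; do !split => //; exact: subg0. Qed.

Lemma pmulS_subgroup p : is_subgroup A -> is_subgroup (pmulS p A).
Proof.
move=> sgA; split; first by exists 0; rewrite mul0rn; split => //; exact: subg0.
by move=> _ _ [a [Aa ->]] [b [Ab ->]]; exists (a - b); rewrite mulrnBl; split => //; exact: subgB.
Qed.

End SubgroupConstructions.

Lemma In_mem (T : eqType) (x : T) (s : seq T) : List.In x s <-> x \in s.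
Proof.
elim: s => [|y s IH] //=; rewrite in_cons; split.
  by case=> [->|/IH ->]; rewrite ?eqxx ?orbT.
by case/orP => [/eqP ->|/IH]; [left | right].
Qed.

Lemma NoDup_uniq (T : eqType) (s : seq T) : List.NoDup s <-> uniq s.
Proof.
elim: s => [|y s IH] /=; first by split => // _; constructor.
split; first by case/List.NoDup_cons_iff => /In_mem/negP ys /IH ->; rewrite ys.
by case/andP => /negP ys /IH us; constructor => // /In_mem.
Qed.

Lemma Zp_nat_eq (m a b : nat) : (1 < m)%N -> a = b %[mod m] -> (a%:R : 'Z_m) = b%:R.
Proof. by move=> m_gt1 ab; rewrite -Zp_nat_mod // ab Zp_nat_mod. Qed.

Lemma Zp_nat_eq0 (m a : nat) : (1 < m)%N -> (a%:R : 'Z_m) = 0 -> (m %| a)%N.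
Proof. by move=> m_gt1 a0; rewrite /dvdn -val_Zp_nat // a0. Qed.

Lemma Zp_mulrn_dvd (m k : nat) (z : 'Z_m) : (1 < m)%N -> (m %| k)%N -> z *+ k = 0.
Proof.
by move=> m_gt1 /dvdnP [j ->]; rewrite -mulr_natr natrM pchar_Zp // !mulr0.
Qed.

(* A / B is the direct sum of the cyclic groups of order p^(lev k) generated
   by the classes of the d_k. *)
Definition cyclic_basis_mod (G : zmodType) (A B : G -> Prop) (p : nat) (K : eqType)
    (lev : K -> nat) (d : K -> G) : Prop :=
  [/\ forall k, A (d k), forall k, B (d k *+ p ^ lev k),
      forall x, A x -> exists s c, uniq s /\ B (x - \sum_(k <- s) d k *+ c k)
    & forall s c, uniq s -> B (\sum_(k <- s) d k *+ c k) ->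
        forall k, k \in s -> (p ^ lev k %| c k)%N].

Section Coordinates.
Variables (G : zmodType) (A B : G -> Prop) (p : nat) (K : eqType) (lev : K -> nat)
  (d : K -> G).
Hypotheses (p_gt1 : (1 < p)%N) (lev_gt0 : forall k, (0 < lev k)%N)
  (sgA : is_subgroup A) (sgB : is_subgroup B) (basis_d : cyclic_basis_mod A B p lev d).

Let plev_gt1 k : (1 < p ^ lev k)%N.
Proof. by rewrite -{1}(expn0 p) ltn_exp2l. Qed.

Definition coef_on (s : seq K) (c : K -> nat) k : nat := if k \in s then c k else 0%N.

Lemma big_coef_on s t (c : K -> nat) : uniq s -> uniq t -> {subset s <= t} ->
  \sum_(k <- s) d k *+ c k = \sum_(k <- t) d k *+ coef_on s c k.
Proof.
move=> us ut st; transitivity (\sum_(k <- t | k \in s) d k *+ c k).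
  rewrite -[RHS]big_filter; apply: perm_big; apply: uniq_perm; rewrite ?filter_uniq //.
  by move=> k; rewrite mem_filter; case ks: (k \in s); rewrite ?(st _ ks).
by rewrite big_mkcond; apply: eq_bigr => k _; rewrite /coef_on; case: (k \in s).
Qed.

(* Coefficients are natural numbers, so a - b is represented by
   a + (p^(lev k) - 1) b, which differs from it by a multiple of d_k p^(lev k). *)
Lemma sum_congr_mod t a b : uniq t ->
  B (\sum_(k <- t) d k *+ a k - \sum_(k <- t) d k *+ b k) ->
  forall k, k \in t -> a k = b k %[mod p ^ lev k].
Proof.
case: basis_d => _ dB _ d_indep ut hB.
pose c k := (a k + (p ^ lev k).-1 * b k)%N.
have Bc : B (\sum_(k <- t) d k *+ c k).
  have -> : \sum_(k <- t) d k *+ c k =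
      (\sum_(k <- t) d k *+ a k - \sum_(k <- t) d k *+ b k)
      + \sum_(k <- t) d k *+ p ^ lev k *+ b k.
    rewrite -sumrB -big_split; apply: eq_bigr => k _ /=.
    rewrite -mulrnA -(prednK (ltnW (plev_gt1 k))) mulSn mulrnDr addrA subrK.
    by rewrite -mulrnDr.
  by apply: (subgD sgB hB); apply: (subg_sumT sgB) => k; exact: (subgMn sgB).
move=> k kt; have := d_indep _ _ ut Bc _ kt; rewrite /c /dvdn => /eqP ck.
have : (a k + (p ^ lev k).-1 * b k + b k = b k %[mod p ^ lev k])%N.
  by rewrite -modnDml ck.
by rewrite -addnA -mulSnr (prednK (ltnW (plev_gt1 k))) mulnC addnC modnMDl.
Qed.

Definition expands (x : G) (sc : seq K * (K -> nat)) :=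
  uniq sc.1 /\ B (x - \sum_(k <- sc.1) d k *+ sc.2 k).

Definition coord (x : G) : forall k, 'Z_(p ^ lev k) :=
  match pselect (exists sc, expands x sc) with
  | left h => let sc := sval (cid h) in fun k => (coef_on sc.1 sc.2 k)%:R
  | right _ => fun _ => 0
  end.

Lemma coordE x s c : expands x (s, c) -> forall k, coord x k = (coef_on s c k)%:R.
Proof.
move=> xsc k; rewrite /coord; case: pselect => [h|]; last first.
  by move=> nh; exfalso; apply: nh; exists (s, c).
case: (cid h) => [[s' c'] [us' Bs']] /=; case: xsc => /= us Bs.
set t := undup (s ++ s'); have ut : uniq t := undup_uniq _.
have st : {subset s <= t} by move=> z zs; rewrite mem_undup mem_cat zs.
have s't : {subset s' <= t} by move=> z zs; rewrite mem_undup mem_cat zs orbT.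
case kt: (k \in t); last first.
  by rewrite /coef_on; case: ifP => [/s't|_]; case: ifP => [/st|_]; rewrite ?kt.
apply: Zp_nat_eq => //; apply: sum_congr_mod kt => //.
have := subgB sgB Bs Bs'; rewrite opprB addrC addrA subrK.
by rewrite (big_coef_on _ us ut st) (big_coef_on _ us' ut s't).
Qed.

Lemma expands_exists x : A x -> exists s c, expands x (s, c).
Proof. by case: basis_d => _ _ d_span _ /d_span [s [c]]; exists s, c. Qed.

Lemma coord_supp x : A x -> exists s, uniq s /\ forall k, coord x k <> 0 -> k \in s.
Proof.
move=> /expands_exists [s [c xsc]]; exists s; split; first by case: xsc.
by move=> k; rewrite (coordE xsc) /coef_on; case: (k \in s).
Qed.

Lemma coordD x y : A x -> A y -> forall k, coord (x + y) k = coord x k + coord y k.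
Proof.
move=> /expands_exists [s [c xsc]] /expands_exists [s' [c' ysc']] k.
set t := undup (s ++ s'); have ut : uniq t := undup_uniq _.
have st : {subset s <= t} by move=> z zs; rewrite mem_undup mem_cat zs.
have s't : {subset s' <= t} by move=> z zs; rewrite mem_undup mem_cat zs orbT.
have xyt : expands (x + y) (t, fun k => (coef_on s c k + coef_on s' c' k)%N).
  split => //=; case: xsc => us Bs; case: ysc' => us' Bs'.
  have -> : \sum_(k <- t) d k *+ (coef_on s c k + coef_on s' c' k) =
      \sum_(k <- s) d k *+ c k + \sum_(k <- s') d k *+ c' k.
    rewrite (big_coef_on _ us ut st) (big_coef_on _ us' ut s't) -big_split.
    by apply: eq_bigr => i _; rewrite mulrnDr.
  rewrite opprD addrACA; exact: (subgD sgB).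
rewrite (coordE xyt) (coordE xsc) (coordE ysc') -natrD /coef_on.
case kt: (k \in t) => //.
by case: ifP => [/st|_]; case: ifP => [/s't|_]; rewrite ?kt.
Qed.

Lemma coord_eq0 x : B x -> forall k, coord x k = 0.
Proof.
move=> Bx k; have x0 : expands x ([::], fun _ => 0%N).
  by split => //=; rewrite big_nil subr0.
by rewrite (coordE x0).
Qed.

Lemma coord_eq0_subg x : A x -> (forall k, coord x k = 0) -> B x.
Proof.
move=> /expands_exists [s [c xsc]] x0; have [us Bs] := xsc.
rewrite -(subrK (\sum_(k <- s) d k *+ c k) x); apply: (subgD sgB Bs).
apply: (subg_sum sgB) => k /In_mem ks; case: basis_d => _ dB _ _.
have := x0 k; rewrite (coordE xsc) /coef_on ks => /(Zp_nat_eq0 (plev_gt1 k)).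
by case/dvdnP => m ->; rewrite mulnC mulrnA; exact: (subgMn sgB).
Qed.

Lemma coord_surj (g : forall k, 'Z_(p ^ lev k)) (s : seq K) :
  (forall k, g k <> 0 -> k \in s) -> exists x, A x /\ forall k, coord x k = g k.
Proof.
case: basis_d => dA _ _ _ gs; exists (\sum_(k <- undup s) d k *+ g k).
have xs : expands (\sum_(k <- undup s) d k *+ g k) (undup s, fun k => (g k : nat)).
  by split; [exact: undup_uniq | rewrite /= subrr; exact: (subg0 sgB)].
split; first by apply: (subg_sumT sgA) => k; exact: (subgMn sgA).
move=> k; rewrite (coordE xs) /coef_on mem_undup.
case ks: (k \in s); first by rewrite natr_Zp.
by case: (g k =P 0) => // /gs; rewrite ks.
Qed.

Lemma coord_expansion x s : A x -> uniq s -> (forall k, coord x k <> 0 -> k \in s) ->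
  B (x - \sum_(k <- s) d k *+ coord x k).
Proof.
move=> /expands_exists [s' [c' xsc']] us xs; have [us' Bs'] := xsc'.
set t := undup (s ++ s'); have ut : uniq t := undup_uniq _.
have st : {subset s <= t} by move=> z zs; rewrite mem_undup mem_cat zs.
have s't : {subset s' <= t} by move=> z zs; rewrite mem_undup mem_cat zs orbT.
have -> : \sum_(k <- s) d k *+ coord x k = \sum_(k <- t) d k *+ coord x k.
  rewrite (big_coef_on _ us ut st); apply: eq_bigr => k _; rewrite /coef_on.
  by case: ifP => // /negbT ks; case: (coord x k =P 0) => [->|/xs] //; rewrite (negbTE ks).
rewrite (big_coef_on _ us' ut s't) in Bs'.
rewrite -(subrK (x - \sum_(k <- t) d k *+ coef_on s' c' k) (x - _)); apply: (subgD sgB) => //.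
rewrite opprB addrC addrA subrK -sumrB; apply: (subg_sumT sgB) => k.
rewrite (coordE xsc') /= val_Zp_nat //; set m := coef_on s' c' k.
case: basis_d => _ dB _ _.
by rewrite {1}(divn_eq m (p ^ lev k)) mulrnDr addrK mulnC mulrnA; exact: (subgMn sgB).
Qed.

Lemma coord_pair_iso (D E : G -> Prop) (full : K -> bool) :
  int_dsum A B D -> (forall x, E x -> D x) ->
  (forall x, D x -> E x <-> forall k, ~~ full k -> (p %| coord x k)%N) ->
  @pair_iso_via G D E p K lev full coord.
Proof.
move=> [_ [sgD [A_BD BD0]]] ED E_coord.
have DA x : D x -> A x by move=> Dx; apply/A_BD; exact: addS_r.
have BA x : B x -> A x by move=> Bx; apply/A_BD; exact: addS_l.
split => //; split.
  move=> x y Dx Dy; apply: functional_extensionality_dep => k.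
  exact: coordD (DA _ Dx) (DA _ Dy) k.
split.
  move=> x y Dx Dy exy; apply/eqP; rewrite -subr_eq0; apply/eqP.
  have Dxy := subgB sgD Dx Dy.
  apply: (BD0 _ _ Dxy); apply: coord_eq0_subg (DA _ Dxy) _ => k.
  have := coordD (DA _ Dxy) (DA _ Dy) k; rewrite subrK exy => h.
  by apply: (addIr (coord y k)); rewrite add0r -h.
split; first by move=> x /DA/coord_supp [s [_ xs]]; exists s => k /xs/In_mem.
split => // g [s gs].
have [z [Az zg]] := coord_surj (s := s) (fun k gk => (In_mem k s).1 (gs k gk)).
have [b [y [Bb [Dy zby]]]] := (A_BD z).1 Az.
exists y; split => //; apply: functional_extensionality_dep => k.
by rewrite -zg zby (coordD (BA _ Bb) (DA _ Dy)) (coord_eq0 Bb) add0r.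
Qed.

End Coordinates.

Section CyclicDecomposition.
Variables (p : nat) (G : zmodType) (I : Type) (e : I -> nat)
  (phi : G -> forall i : I, 'Z_(p ^ e i)%N).
Hypotheses (p_prime : prime p) (cd : cyclic_decomp phi).

Local Notation GN n := (Gn phi n).

Lemma pe_gt1 i : (1 < p ^ e i)%N.
Proof. by case: cd => e_gt0 _; rewrite -{1}(expn0 p) ltn_exp2l ?prime_gt1. Qed.

Lemma phiD x y i : phi (x + y) i = phi x i + phi y i.
Proof. by case: cd => _ [_ [phi_add _]]; rewrite phi_add. Qed.

Lemma phi0 i : phi 0 i = 0.
Proof. by apply: (addrI (phi 0 i)); rewrite -phiD !addr0. Qed.

Lemma phiB x y i : phi (x - y) i = phi x i - phi y i.
Proof. by apply: (addIr (phi y i)); rewrite -phiD !subrK. Qed.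

Lemma phiMn x m i : phi (x *+ m) i = phi x i *+ m.
Proof. by elim: m => [|m IH]; rewrite ?mulr0n ?phi0 // !mulrS phiD IH. Qed.

Lemma phi_inj x y : (forall i, phi x i = phi y i) -> x = y.
Proof.
by case: cd => _ [_ [_ [phi_inj _]]] xy; apply: phi_inj => //; exact: functional_extensionality_dep.
Qed.

Lemma phi_surj (g : forall i : I, 'Z_(p ^ e i)) (s : seq I) :
  (forall i, g i <> 0 -> List.In i s) -> exists x, forall i, phi x i = g i.
Proof.
case: cd => _ [_ [_ [_ [_ [phi_surj _]]]]] gs.
by have [x [_ xg]] := phi_surj g (ex_intro _ s gs); exists x; rewrite xg.
Qed.

Lemma phi_supp x : exists s, forall i, phi x i <> 0 -> List.In i s.
Proof. by case: cd => _ [_ [_ [_ [phi_fsupp _]]]]; exact: phi_fsupp. Qed.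

Lemma Gn_subgroup n : is_subgroup (GN n).
Proof.
split; first by move=> i _; exact: phi0.
by move=> x y Gx Gy i ni; rewrite phiB Gx ?Gy ?subrr.
Qed.

Lemma Gn_mono m n x : (m <= n)%N -> GN m x -> GN n x.
Proof. by move=> mn Gx i ni; apply: Gx; exact: leq_ltn_trans ni. Qed.

Lemma Gn0 x : GN 0 x -> x = 0.
Proof. by case: cd => e_gt0 _ Gx; apply: phi_inj => i; rewrite phi0 Gx ?e_gt0. Qed.

Lemma Gn_bound x : exists n, GN n x.
Proof.
have [s xs] := phi_supp x; exists (\max_(i <- s) e i) => i ni.
have le_max j : List.In j s -> (e j <= \max_(i <- s) e i)%N.
  elim: {xs ni} s => [|k s IH] //= [<-|/IH ejs]; rewrite big_cons ?leq_maxl //.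
  exact: leq_trans ejs (leq_maxr _ _).
by case: (phi x i =P 0) => // /xs/le_max; rewrite leqNgt ni.
Qed.

Lemma Gn_exp n x : GN n x -> x *+ p ^ n = 0.
Proof.
move=> Gx; apply: phi_inj => i; rewrite phiMn phi0.
case: (ltnP n (e i)) => ni; first by rewrite Gx // mul0rn.
by apply: Zp_mulrn_dvd; [exact: pe_gt1 | exact: dvdn_exp2l].
Qed.

Lemma Gn_opp n x : GN n x -> - x = x *+ (p ^ n).-1.
Proof.
move=> /Gn_exp xp; apply/eqP; rewrite eq_sym -subr_eq0 opprK -mulrSr.
by rewrite prednK ?expn_gt0 ?prime_gt0 // xp.
Qed.

(* The height argument: on the summands of order p^n the condition forces
   every coordinate to be divisible by p; the other coordinates go to the
   G_(n-1) part. *)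
Lemma Gn_pexp_pred_split n k w : (0 < n)%N -> (k < n)%N -> GN n w ->
  GN n.-1 (w *+ p ^ k) -> exists a y, GN n.-1 a /\ GN n y /\ w = a + y *+ p.
Proof.
move=> n_gt0 kn Gw Gwk; have [s ws] := phi_supp w.
pose ga i := if (e i < n)%N then phi w i else 0.
pose gy i := if e i == n then (((phi w i : nat) %/ p)%N%:R : 'Z_(p ^ e i)) else 0.
have [a aE] : exists a, forall i, phi a i = ga i.
  by apply: (phi_surj (s := s)) => i; rewrite /ga; case: ifP => // _; exact: ws.
have [y yE] : exists y, forall i, phi y i = gy i.
  apply: (phi_surj (s := s)) => i; rewrite /gy; case: ifP => // _.
  by case: (phi w i =P 0) => [->|/ws //]; rewrite /= div0n.
exists a, y; split.
  move=> i ni; rewrite aE /ga; case: ifP => // ein.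
  by move: ni; rewrite -ltnS (prednK n_gt0) ltnS leqNgt ein.
split; first by move=> i ni; rewrite yE /gy; case: eqP => // ein; rewrite ein ltnn in ni.
apply: phi_inj => i; rewrite phiD phiMn aE yE /ga /gy.
case: (ltngtP (e i) n) => ein; first by rewrite mul0rn addr0.
  by rewrite Gw // mul0rn addr0.
have wk0 : phi w i *+ p ^ k = 0 by rewrite -phiMn Gwk // ein ltn_predL.
set z := phi w i in wk0 *.
have pn_wk : (p ^ n %| z * p ^ k)%N.
  rewrite -ein; move: wk0; rewrite -[z in z *+ _]natr_Zp -mulrnA.
  by move/(congr1 val); rewrite /= val_Zp_nat ?pe_gt1 // /dvdn => ->.
have p_w : (p %| z)%N.
  move: pn_wk; rewrite -(subnK (ltnW kn)) expnD dvdn_pmul2r ?expn_gt0 ?prime_gt0 //.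
  have nk_gt0 : (0 < n - k)%N by rewrite subn_gt0.
  by apply: dvdn_trans; rewrite -(prednK nk_gt0) expnS dvdn_mulr.
by rewrite -mulrnA divnK // natr_Zp add0r.
Qed.

End CyclicDecomposition.

Definition Fp_basis (G : zmodType) (p : nat) (N M : G -> Prop) (J : Type) (b : J -> G) :=
  (forall j, N (b j)) /\
  (forall (s : seq J) (c : J -> nat), List.NoDup s ->
     M (\sum_(j <- s) b j *+ c j) -> forall j, List.In j s -> (p %| c j)%N) /\
  (forall x, N x -> exists (s : seq J) (c : J -> nat), M (x - \sum_(j <- s) b j *+ c j)).

Section FpBasis.
Variables (G : zmodType) (p : nat) (N M : G -> Prop).
Hypotheses (p_prime : prime p) (sgM : is_subgroup M) (pNM : forall x, N x -> M (x *+ p)).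

Definition indep_mod (S : set G) : Prop :=
  (forall x, S x -> N x) /\
  forall (s : seq G) (c : G -> nat), uniq s -> (forall y, y \in s -> S y) ->
    M (\sum_(y <- s) y *+ c y) -> forall y, y \in s -> (p %| c y)%N.

Definition spanned_mod (S : set G) (x : G) : Prop :=
  exists (s : seq G) (c : G -> nat),
    (forall y, y \in s -> S y) /\ M (x - \sum_(y <- s) y *+ c y).

Lemma mulrn_dvd_mod x k : N x -> (p %| k)%N -> M (x *+ k).
Proof. by move=> Nx /dvdnP [m ->]; rewrite mulnC mulrnA; exact: (subgMn sgM) (pNM Nx). Qed.

Lemma indep_mod_bigcup (F : set (set G)) :
  (F `<=` indep_mod)%classic -> total_on F subset ->
  indep_mod (\bigcup_(X in F) X)%classic.
Proof.
move=> F_indep F_total; split; first by move=> x [X FX Xx]; case: (F_indep _ FX) => XN _; exact: XN.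
move=> s c us sF.
have [->|[X [FX sX]]] : s = [::] \/ exists X, F X /\ forall y, y \in s -> X y.
  elim: {us c} s sF => [|y s IH] sF; [by left | right].
  have [Y FY Yy] := sF y (mem_head _ _).
  have [->|[X [FX sX]]] := IH (fun z zs => sF z (mem_behead (zs : z \in behead (y :: s)))).
    by exists Y; split => // z; rewrite inE => /eqP ->.
  have [YX|XY] := F_total _ _ FY FX.
    by exists X; split => // z; rewrite inE => /orP [/eqP ->|/sX]; [exact: YX|].
  by exists Y; split => // z; rewrite inE => /orP [/eqP ->|/sX/XY].
  by [].
by case: (F_indep _ FX) => _; apply.
Qed.

Lemma indep_mod_add S x : indep_mod S -> N x -> ~ spanned_mod S x ->
  indep_mod (fun y => S y \/ y = x).
Proof.
move=> [SN S_indep] Nx xS; split; first by move=> y [/SN|->].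
move=> s c us sSx Ms.
case xs: (x \in s); last first.
  apply: S_indep Ms => // y ys; case: (sSx y ys) => // yx.
  by rewrite -yx ys in xs.
pose r := [seq y <- s | y != x].
have ur : uniq r by rewrite filter_uniq.
have rS y : y \in r -> S y.
  by rewrite mem_filter => /andP [yx /sSx [//|/eqP]]; rewrite (negbTE yx).
have sum_s : \sum_(y <- s) y *+ c y = x *+ c x + \sum_(y <- r) y *+ c y.
  by rewrite (bigD1_seq x) //= big_filter.
(* If p did not divide c x, then x would be spanned by r modulo M. *)
have p_cx : (p %| c x)%N.
  apply: contraT => p_ncx; exfalso.
  have [a _ cx_inv] := Bezoutl (c x) (prime_gt0 p_prime).
  rewrite (eqP (_ : coprime p (c x))) ?prime_coprime // in cx_inv.
  apply: xS; exists r, (fun y => (a * c y)%N); split => //.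
  have /(subgB sgM (mulrn_dvd_mod Nx cx_inv)) : M ((\sum_(y <- s) y *+ c y) *+ a).
    exact: subgMn.
  congr M; rewrite sum_s mulrnDl -sumrMnl mulrnDr mulr1n -mulrnA mulnC opprD addrA addrK.
  by congr (_ - _); apply: eq_bigr => y _; rewrite mulnC mulrnA.
move=> y ys; have [-> //|yx] := eqVneq y x.
apply: (S_indep r c ur rS); last by rewrite mem_filter yx.
by move: (subgB sgM Ms (mulrn_dvd_mod Nx p_cx)); rewrite sum_s addrC addKr.
Qed.

Lemma indep_mod_maximal : exists S, indep_mod S /\ forall x, N x -> spanned_mod S x.
Proof.
have [S [S_indep S_max]] := Zorn_bigcup indep_mod_bigcup.
exists S; split => // x Nx; apply: contrapT => xS.
have Sx : ~ S x.
  move=> Sx; apply: xS; exists [:: x], (fun _ => 1%N); split; first by move=> y /[!inE] /eqP ->.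
  by rewrite big_seq1 subrr; exact: (subg0 sgM).
apply: (S_max (fun y => S y \/ y = x)); last exact: indep_mod_add.
by split; [move=> y Sy; left | move=> xS'; apply: Sx; apply: xS'; right].
Qed.

Lemma Fp_dim_exists : exists J : Type, Fp_dim p N M J.
Proof.
have [S [[SN S_indep] S_span]] := indep_mod_maximal.
exists {x : G | S x}, sval; split; first by case.
pose lift (y : G) : option {x : G | S x} :=
  if pselect (S y) is left Sy then Some (exist _ y Sy) else None.
have liftK (j : {x : G | S x}) : lift (sval j) = Some j.
  case: j => x Sx; rewrite /lift /=; case: pselect => // Sx'.
  by congr (Some (exist _ _ _)); exact: Prop_irrelevance.
split.
  move=> s c nds Ms j js.
  pose c' (y : G) := if lift y is Some j then c j else 0%N.
  have c'K i : c' (sval i) = c i by rewrite /c' liftK.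
  have us' : uniq (map sval s).
    apply/NoDup_uniq/FinFun.Injective_map_NoDup => // i i' ii'.
    by apply: Some_inj; rewrite -!liftK ii'.
  rewrite -c'K; apply: (S_indep _ _ us'); last exact/In_mem/List.in_map.
    by move=> y /In_mem/List.in_map_iff [i [<- _]]; exact: svalP.
  by rewrite big_map; under eq_bigr do rewrite c'K.
move=> x /S_span [s [c [sS Ms]]].
exists (pmap lift s), (fun j => c (sval j)).
suff -> : \sum_(j <- pmap lift s) sval j *+ c (sval j) = \sum_(y <- s) y *+ c y by [].
rewrite -(big_map sval xpredT (fun y => y *+ c y)); congr (\sum_(_ <- _) _).
elim: s sS {Ms} => [|y s IH] sS //=; rewrite /lift.
case: pselect => [Sy|]; last by move/(_ (sS y (mem_head _ _))).
by rewrite /= IH // => z zs; apply: sS; rewrite inE zs orbT.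
Qed.

End FpBasis.

Section LinearCombination.
Variables (G : zmodType) (L : Type) (f : L -> G).

Definition lincomb (l : seq (L * nat)) : G := \sum_(kc <- l) f kc.1 *+ kc.2.

Lemma lincomb_nil : lincomb [::] = 0. Proof. by rewrite /lincomb big_nil. Qed.

Lemma lincomb_cat l l' : lincomb (l ++ l') = lincomb l + lincomb l'.
Proof. by rewrite /lincomb big_cat. Qed.

Lemma lincomb_mulrn l m :
  lincomb [seq (kc.1, (kc.2 * m)%N) | kc <- l] = lincomb l *+ m.
Proof. by rewrite /lincomb big_map -sumrMnl; apply: eq_bigr => kc _; rewrite mulrnA. Qed.

End LinearCombination.

Lemma lincomb_uniq (G : zmodType) (L : eqType) (f : L -> G) (l : seq (L * nat)) :
  exists s c, uniq s /\ lincomb f l = \sum_(k <- s) f k *+ c k.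
Proof.
elim: l => [|[k0 c0] l [s [c [us fl]]]].
  by exists [::], (fun _ => 0%N); rewrite lincomb_nil big_nil.
rewrite /lincomb big_cons -/(lincomb f l) fl /=; case ks: (k0 \in s).
  exists s, (fun k => if k == k0 then (c0 + c k)%N else c k); split => //.
  rewrite [RHS](bigD1_seq k0) // (bigD1_seq k0) //= eqxx mulrnDr -addrA; congr (_ + _).
  by congr (_ + _); apply: eq_bigr => k /negbTE ->.
exists (k0 :: s), (fun k => if k == k0 then c0 else c k); split; first by rewrite /= ks.
rewrite big_cons eqxx; congr (_ + _); apply: eq_big_seq => k ks'.
by case: eqP => // kk0; rewrite kk0 ks in ks'.
Qed.

Section SumSplit.
Variables (X Y : Type).
Local Notation XY := {classic (X + Y)}.

Definition lefts (s : seq XY) : seq X := pmap (fun k => if k is inl j then Some j else None) s.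
Definition rights (s : seq XY) : seq Y := pmap (fun k => if k is inr j then Some j else None) s.

Lemma In_lefts s j : List.In j (lefts s) <-> (inl j : XY) \in s.
Proof.
elim: s => [|[i|i] s IH] //=; rewrite in_cons; last first.
  by rewrite (_ : (inl j : XY) == inr i = false) //; apply/eqP.
split; first by case=> [->|/IH ->]; rewrite ?eqxx ?orbT.
by case/orP => [/eqP [->]|/IH]; [left | right].
Qed.

Lemma In_rights s j : List.In j (rights s) <-> (inr j : XY) \in s.
Proof.
elim: s => [|[i|i] s IH] //=; rewrite in_cons.
  by rewrite (_ : (inr j : XY) == inl i = false) //; apply/eqP.
split; first by case=> [->|/IH ->]; rewrite ?eqxx ?orbT.
by case/orP => [/eqP [->]|/IH]; [left | right].
Qed.

Lemma NoDup_lefts s : uniq s -> List.NoDup (lefts s).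
Proof.
elim: s => [|[i|i] s IH] /=; first by constructor.
  by case/andP => /negP ns us; constructor => [/In_lefts|]; auto.
by case/andP => _ /IH.
Qed.

Lemma NoDup_rights s : uniq s -> List.NoDup (rights s).
Proof.
elim: s => [|[i|i] s IH] /=; first by constructor.
  by case/andP => _ /IH.
by case/andP => /negP ns us; constructor => [/In_rights|]; auto.
Qed.

Lemma big_sum_split (G : zmodType) (f : X + Y -> G) (s : seq XY) (c : X + Y -> nat) :
  \sum_(k <- s) f k *+ c k =
  \sum_(j <- lefts s) f (inl j) *+ c (inl j) + \sum_(j <- rights s) f (inr j) *+ c (inr j).
Proof.
elim: s => [|[i|i] s IH] /=; first by rewrite !big_nil addr0.
  by rewrite !big_cons IH addrA.
by rewrite !big_cons IH addrCA.
Qed.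

End SumSplit.

Section Levels.
Variables (p : nat) (G : zmodType) (U : G -> Prop) (I : Type) (e : I -> nat)
  (phi : G -> forall i : I, 'Z_(p ^ e i)%N).
Hypotheses (p_prime : prime p) (sgU : is_subgroup U) (pU : forall x, U (x *+ p))
  (cd : cyclic_decomp phi).

Local Notation GN n := (Gn phi n).
Let sgG n : is_subgroup (GN n) := Gn_subgroup cd n.

Definition Un n x := U x /\ GN n x.
Definition GUn n := addS (GN n.-1) (Un n).
Definition GpGn n := addS (GN n.-1) (pmulS p (GN n)).

Lemma Un_subgroup n : is_subgroup (Un n). Proof. exact: subgroupI sgU (sgG n). Qed.

Lemma GUn_subgroup n : is_subgroup (GUn n).
Proof. exact: addS_subgroup (sgG _) (Un_subgroup n). Qed.

Lemma GpGn_subgroup n : is_subgroup (GpGn n).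
Proof. exact: addS_subgroup (sgG _) (pmulS_subgroup p (sgG n)). Qed.

Lemma Gn_pred n x : GN n.-1 x -> GN n x. Proof. exact: Gn_mono (leq_pred n). Qed.

Lemma GpGn_GUn n x : GpGn n x -> GUn n x.
Proof.
move=> [a [_ [Ga [[y [Gy ->]] ->]]]]; exists a, (y *+ p).
have UGy : Un n (y *+ p) by split; [exact: pU | exact: (subgMn (sgG n) p Gy)].
by split => //; split.
Qed.

Lemma Gn_mulrn_GpGn n x : GN n x -> GpGn n (x *+ p).
Proof. by move=> Gx; apply: addS_r (sgG _) _; exists x. Qed.

Lemma Gn_mulrn_GUn n x : GN n x -> GUn n (x *+ p).
Proof. by move/Gn_mulrn_GpGn/GpGn_GUn. Qed.

Lemma GUn_mulrn n x : GUn n x -> GpGn n (x *+ p).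
Proof.
move=> [a [u [Ga [[_ Gu] ->]]]]; exists (a *+ p), (u *+ p).
by rewrite mulrnDl; split; [exact: (subgMn (sgG _) p Ga) | split => //; exists u].
Qed.

Section Level.
Variables (n : nat) (J1 J2 : Type) (b1 : J1 -> G) (b2 : J2 -> G).
Hypotheses (n_gt0 : (0 < n)%N) (basis_b1 : Fp_basis p (GUn n) (GpGn n) b1)
  (basis_b2 : Fp_basis p (GN n) (GUn n) b2).

Lemma ex_Un_part j : exists u, Un n u /\ GN n.-1 (b1 j - u).
Proof. by case: basis_b1 => /(_ j) [a [u [Ga [Uu ->]]]] _; exists u; rewrite addrK. Qed.

Definition Un_part j := sval (cid (ex_Un_part j)).

Lemma Un_partP j : Un n (Un_part j) /\ GN n.-1 (b1 j - Un_part j).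
Proof. exact: svalP (cid (ex_Un_part j)). Qed.

Local Notation K := {classic (J1 + J2)}.

Definition level_basis (k : J1 + J2) : G :=
  match k with inl j => Un_part j | inr j => b2 j end.

Definition level_full (k : J1 + J2) : bool := if k is inl _ then true else false.

Lemma level_basis_Gn k : GN n (level_basis k).
Proof. by case: k => j /=; [case: (Un_partP j) => [[]] | case: basis_b2]. Qed.

Lemma level_basis_inl_U j : U (level_basis (inl j)).
Proof. by case: (Un_partP j) => [[]]. Qed.

Lemma level_sum_Gn (s : seq K) (c : K -> nat) : GN n (\sum_(k <- s) level_basis k *+ c k).
Proof. by apply: (subg_sumT (sgG n)) => k; apply: (subgMn (sgG n)); exact: level_basis_Gn. Qed.

Lemma level_sum_U (s : seq K) (c : K -> nat) :
  (forall j, (inr j : K) \in s -> (p %| c (inr j))%N) ->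
  U (\sum_(k <- s) level_basis k *+ c k).
Proof.
move=> p_c; apply: (subg_sum sgU) => -[j|j] /In_mem js /=.
  exact: (subgMn sgU) (level_basis_inl_U j).
by have /dvdnP [m ->] := p_c j js; rewrite mulrnA; exact: pU.
Qed.

Lemma level_span_mod x : GN n x -> exists l : seq (K * nat), GpGn n (x - lincomb level_basis l).
Proof.
case: basis_b1 basis_b2 => _ [_ b1_span] [_ [_ b2_span]].
move=> /b2_span [s2 [c2 x_s2]]; have [s1 [c1 x_s1]] := b1_span _ x_s2.
exists ([seq ((inr j : K), c2 j) | j <- s2] ++ [seq ((inl j : K), c1 j) | j <- s1]).
rewrite lincomb_cat /lincomb !big_map /=.
set B2 := \sum_(j <- s2) b2 j *+ c2 j in x_s1 *.
set B1 := \sum_(j <- s1) b1 j *+ c1 j in x_s1.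
set U1 := \sum_(j <- s1) Un_part j *+ c1 j.
have -> : x - (B2 + U1) = (x - B2 - B1) + (B1 - U1) by rewrite addrA subrK opprD addrA.
apply: (subgD (GpGn_subgroup n) x_s1); apply: (addS_l (pmulS_subgroup p (sgG n))).
rewrite /B1 /U1 -sumrB; apply: (subg_sumT (sgG _)) => j.
by rewrite -mulrnBl; apply: (subgMn (sgG _)); case: (Un_partP j).
Qed.

Lemma level_span_pexp m x : GN n x -> exists (l : seq (K * nat)) a y,
  GN n.-1 a /\ GN n y /\ x - lincomb level_basis l = a + y *+ p ^ m.
Proof.
move=> Gx; elim: m => [|m [l [a [y [Ga [Gy xl]]]]]].
  exists [::], 0, x; split; first exact: subg0 (sgG _).
  by rewrite lincomb_nil subr0 add0r expn0 mulr1n.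
have [l' [a' [_ [Ga' [[y' [Gy' ->]] yl']]]]] := level_span_mod Gy.
exists (l ++ [seq (kc.1, (kc.2 * p ^ m)%N) | kc <- l']), (a + a' *+ p ^ m), y'.
split; first by apply: (subgD (sgG _) Ga); exact: (subgMn (sgG _) _ Ga').
split => //; rewrite lincomb_cat lincomb_mulrn opprD addrA xl -addrA -mulrnBl yl'.
by rewrite mulrnDl addrA -mulrnA -expnS.
Qed.

Lemma level_span x : GN n x -> exists l : seq (K * nat), GN n.-1 (x - lincomb level_basis l).
Proof.
move=> /(level_span_pexp n) [l [a [y [Ga [Gy xl]]]]].
by exists l; rewrite xl (Gn_exp p_prime cd Gy) addr0.
Qed.

Lemma level_sum_lefts_Un (s : seq K) (c : K -> nat) :
  Un n (\sum_(j <- lefts s) level_basis (inl j) *+ c (inl j)).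
Proof.
apply: (subg_sumT (Un_subgroup n)) => j; apply: (subgMn (Un_subgroup n)).
by case: (Un_partP j).
Qed.

Lemma level_indep_GUn (s : seq K) (c : K -> nat) : uniq s ->
  GUn n (\sum_(k <- s) level_basis k *+ c k) ->
  forall j, (inr j : K) \in s -> (p %| c (inr j))%N.
Proof.
case: basis_b2 => _ [b2_indep _] us; rewrite big_sum_split => sum_GUn j js.
apply: (b2_indep _ (fun j => c (inr j)) (NoDup_rights us)); last exact/In_rights.
move: (subgB (GUn_subgroup n) sum_GUn (addS_r (sgG _) (level_sum_lefts_Un s c))).
by rewrite addrC addKr.
Qed.

Lemma level_indep_GpGn (s : seq K) (c : K -> nat) : uniq s ->
  GpGn n (\sum_(k <- s) level_basis k *+ c k) -> forall k, k \in s -> (p %| c k)%N.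
Proof.
case: basis_b1 => _ [b1_indep _] us sum_GpGn.
have p_c2 := level_indep_GUn us (GpGn_GUn sum_GpGn).
pose S1 := \sum_(j <- lefts s) level_basis (inl j) *+ c (inl j).
pose S2 := \sum_(j <- rights s) level_basis (inr j) *+ c (inr j).
have S2_GpGn : GpGn n S2.
  apply: (subg_sum (GpGn_subgroup n)) => j /In_rights/p_c2/dvdnP [m ->] /=.
  rewrite mulrnA; apply: Gn_mulrn_GpGn; apply: (subgMn (sgG n)).
  by case: basis_b2.
have S1_GpGn : GpGn n S1.
  move: (subgB (GpGn_subgroup n) sum_GpGn S2_GpGn).
  by rewrite big_sum_split -/S1 -/S2 addrK.
have b1_GpGn : GpGn n (\sum_(j <- lefts s) b1 j *+ c (inl j)).
  have -> : \sum_(j <- lefts s) b1 j *+ c (inl j) =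
      S1 + \sum_(j <- lefts s) (b1 j - Un_part j) *+ c (inl j).
    by rewrite -big_split; apply: eq_bigr => j _ /=; rewrite mulrnBl addrC subrK.
  apply: (subgD (GpGn_subgroup n) S1_GpGn); apply: (addS_l (pmulS_subgroup p (sgG n))).
  by apply: (subg_sumT (sgG _)) => j; apply: (subgMn (sgG _)); case: (Un_partP j).
case=> [j|j] js; last exact: p_c2.
by apply: (b1_indep _ (fun j => c (inl j)) (NoDup_lefts us) b1_GpGn); exact/In_lefts.
Qed.

(* Induction on m <= n: once p^m divides all coefficients, dividing them by
   p^m leaves an element w of G_n with p^m w ∈ G_(n-1); hence w ∈ G_(n-1) + p G_n
   and the previous lemma provides one more factor p. *)
Lemma level_indep (s : seq K) (c : K -> nat) : uniq s ->
  GN n.-1 (\sum_(k <- s) level_basis k *+ c k) -> forall k, k \in s -> (p ^ n %| c k)%N.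
Proof.
move=> us sum_G; suff: forall m, (m <= n)%N -> forall k, k \in s -> (p ^ m %| c k)%N by apply.
elim=> [|m IH] mn k ks; first by rewrite expn0 dvd1n.
have pm_c := IH (ltnW mn).
pose c' k := (c k %/ p ^ m)%N.
have sum_c' : \sum_(k <- s) level_basis k *+ c k =
    (\sum_(k <- s) level_basis k *+ c' k) *+ p ^ m.
  by rewrite -sumrMnl; apply: eq_big_seq => i i_s; rewrite -mulrnA /c' divnK ?pm_c.
rewrite sum_c' in sum_G.
have [a [y [Ga [Gy sum_ay]]]] :=
  Gn_pexp_pred_split p_prime cd n_gt0 mn (level_sum_Gn s c') sum_G.
have sum_GpGn : GpGn n (\sum_(k <- s) level_basis k *+ c' k).
  rewrite sum_ay; apply: (subgD (GpGn_subgroup n)); last exact: Gn_mulrn_GpGn.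
  exact: (addS_l (pmulS_subgroup p (sgG n)) Ga).
rewrite -(divnK (pm_c k ks)) expnS dvdn_pmul2r ?expn_gt0 ?prime_gt0 //.
exact: level_indep_GpGn sum_GpGn k ks.
Qed.

Lemma level_cyclic_basis :
  cyclic_basis_mod (GN n) (GN n.-1) p (fun _ : K => n) level_basis.
Proof.
split => [k|k|x Gx|]; [exact: level_basis_Gn | | | exact: level_indep].
  by rewrite (Gn_exp p_prime cd (level_basis_Gn k)); exact: subg0 (sgG _).
have [l xl] := level_span Gx; have [s [c [us ls]]] := lincomb_uniq (level_basis : K -> G) l.
by exists s, c; rewrite -ls.
Qed.

Definition level_complement x := exists l : seq (K * nat), x = lincomb level_basis l.

Lemma level_complement_Gn x : level_complement x -> GN n x.
Proof.
move=> [l ->]; apply: (subg_sumT (sgG n)) => kc; apply: (subgMn (sgG n)).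
exact: level_basis_Gn.
Qed.

Lemma level_complement_subgroup : is_subgroup level_complement.
Proof.
split; first by exists [::]; rewrite lincomb_nil.
move=> _ _ [l ->] [l' ->]; exists (l ++ [seq (kc.1, (kc.2 * (p ^ n).-1)%N) | kc <- l']).
have Dl' : level_complement (lincomb level_basis l') by exists l'.
by rewrite lincomb_cat lincomb_mulrn (Gn_opp p_prime cd (level_complement_Gn Dl')).
Qed.

Lemma level_complement_cap x : level_complement x -> GN n.-1 x -> x = 0.
Proof.
move=> [l ->]; have [s [c [us ->]]] := lincomb_uniq (level_basis : K -> G) l => sum_G.
apply: big1_seq => k /andP [_ ks]; have /dvdnP [m ->] := level_indep us sum_G ks.
by rewrite mulnC mulrnA (Gn_exp p_prime cd (level_basis_Gn k)) mul0rn.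
Qed.

Lemma level_complement_dsum : int_dsum (GN n) (GN n.-1) level_complement.
Proof.
split; first exact: sgG.
split; first exact: level_complement_subgroup.
split=> [x|x Gx Dx]; last exact: level_complement_cap.
split; last first.
  move=> [a [y [Ga [Dy ->]]]]; apply: (subgD (sgG n)); first exact: Gn_pred.
  exact: level_complement_Gn.
move=> /level_span [l xl]; exists (x - lincomb level_basis l), (lincomb level_basis l).
by split => //; split; [exists l | rewrite subrK].
Qed.

Lemma level_complementU_dsum :
  int_dsum (Un n) (fun x => U x /\ GN n.-1 x) (fun x => level_complement x /\ U x).
Proof.
split; first exact: Un_subgroup.
split; first exact: subgroupI level_complement_subgroup sgU.
split=> [x|x [_ Gx] [Dx _]]; last exact: level_complement_cap.
split; last first.
  move=> [a [y [[Ua Ga] [[Dy Uy] ->]]]]; split; first exact: (subgD sgU).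
  by apply: (subgD (sgG n)); [exact: Gn_pred | exact: level_complement_Gn].
move=> [Ux Gx]; have [_ [_ [G_D _]]] := level_complement_dsum.
have [a [y [Ga [[l yl] xay]]]] := (G_D x).1 Gx.
have [s [c [us ls]]] := lincomb_uniq (level_basis : K -> G) l.
have Uy : U y.
  rewrite yl ls; apply: level_sum_U; apply: level_indep_GUn us _.
  rewrite -ls -yl; exists (- a), x; split; first exact: (subgN (sgG _) Ga).
  by split; [split | rewrite xay addKr].
have a_xy : a = x - y by rewrite xay addrK.
exists a, y; split; first by split => //; rewrite a_xy; exact: (subgB sgU).
by split => //; split => //; exists l.
Qed.

Local Notation level_coord := (coord (GN n.-1) p (fun _ : K => n) level_basis).

Lemma level_coord_U (D E : G -> Prop) : (forall x, E x -> D x) ->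
  int_dsum (GN n) (GN n.-1) D -> int_dsum (Un n) (fun x => U x /\ GN n.-1 x) E ->
  forall x, D x -> E x <-> forall k, ~~ level_full k -> (p %| level_coord x k)%N.
Proof.
move=> ED [_ [sgD [G_D GD0]]] [_ [_ [Un_E UE0]]] x Dx.
have DG y : D y -> GN n y by move=> Dy; apply/G_D; exact: (addS_r (sgG _) Dy).
have EU y : E y -> U y.
  by move=> Ey; have [] : Un n y by apply/Un_E; exact: (addS_r (subgroupI sgU (sgG _)) Ey).
have [s [us xs]] := coord_supp (prime_gt1 p_prime) (fun _ : K => n_gt0) (sgG n.-1)
  level_cyclic_basis (DG _ Dx).
have x_sum := coord_expansion (prime_gt1 p_prime) (fun _ : K => n_gt0) (sgG n.-1)
  level_cyclic_basis (DG _ Dx) us xs.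
set S := \sum_(k <- s) level_basis k *+ level_coord x k in x_sum.
split.
  move=> Ex [j|j] //= _; case js: ((inr j : K) \in s); last first.
    by case: (level_coord x (inr j) =P 0) => [->|/xs]; rewrite ?dvdn0 ?js.
  apply: (@level_indep_GUn s (fun k => level_coord x k) us _ j js); exists (- (x - S)), x.
  split; first exact: (subgN (sgG _) x_sum).
  by split; [split; [exact: EU | exact: DG] | rewrite opprB subrK].
move=> p_coord.
have US : U S by apply: level_sum_U => j _; exact: (p_coord (inr j) isT).
have [u [y [[Uu Gu] [Ey Suy]]]] : addS (fun x => U x /\ GN n.-1 x) E S.
  by apply/Un_E; split => //; exact: level_sum_Gn.
suff -> : x = y by [].
apply/eqP; rewrite -subr_eq0; apply/eqP; apply: GD0 (subgB sgD Dx (ED _ Ey)).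
have -> : x - y = (x - S) + u by rewrite Suy opprD addrA addrAC subrK.
exact: (subgD (sgG _) x_sum Gu).
Qed.

Lemma level_pair_iso (D E : G -> Prop) : (forall x, E x -> D x) ->
  int_dsum (GN n) (GN n.-1) D -> int_dsum (Un n) (fun x => U x /\ GN n.-1 x) E ->
  pair_iso D E p (fun _ : J1 + J2 => n) level_full.
Proof.
move=> ED D_dsum E_dsum; exists level_coord.
exact: (coord_pair_iso (prime_gt1 p_prime) (fun _ : K => n_gt0) (sgG n) (sgG n.-1)
  level_cyclic_basis D_dsum ED (level_coord_U ED D_dsum E_dsum)).
Qed.

End Level.

Section Global.
Variables (J1 J2 : nat -> Type).
Hypothesis dims : forall n, (0 < n)%N ->
  Fp_dim p (GUn n) (GpGn n) (J1 n) /\ Fp_dim p (GN n) (GUn n) (J2 n).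

Definition basis1 m : {b | Fp_basis p (GUn m.+1) (GpGn m.+1) b} := cid (dims (ltn0Sn m)).1.
Definition basis2 m : {b | Fp_basis p (GN m.+1) (GUn m.+1) b} := cid (dims (ltn0Sn m)).2.

Let b1P m := svalP (basis1 m).
Let b2P m := svalP (basis2 m).

Local Notation KK := {classic {m : nat & (J1 m.+1 + J2 m.+1)%type}}.
Local Notation Km m := {classic (J1 m.+1 + J2 m.+1)}.

Definition glob_basis (k : KK) : G :=
  level_basis (sval (basis2 (projT1 k))) (b1P (projT1 k)) (projT2 k).
Definition glob_lev (k : KK) : nat := (projT1 k).+1.
Definition glob_full (k : KK) : bool := if projT2 k is inl _ then true else false.

Lemma glob_basis_Gn k : GN (glob_lev k) (glob_basis k).
Proof. exact: (level_basis_Gn (b1P _) (b2P _) (projT2 k)). Qed.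

Lemma glob_sum_Gn M (s : seq KK) (P : pred KK) (c : KK -> nat) :
  (forall k, k \in s -> P k -> (projT1 k < M)%N) ->
  GN M (\sum_(k <- s | P k) glob_basis k *+ c k).
Proof.
move=> s_lt; rewrite big_seq_cond; apply: (big_ind (GN M)) => [|x y|k /andP [ks Pk]].
- exact: subg0 (sgG M).
- exact: (subgD (sgG M)).
by apply: (subgMn (sgG M)); exact: (Gn_mono (s_lt k ks Pk) (@glob_basis_Gn k)).
Qed.

Lemma glob_split_top M (s : seq KK) (c : KK -> nat) : uniq s ->
  exists2 s' : seq (Km M), uniq s' &
    \sum_(k <- s) glob_basis k *+ c k =
      \sum_(j <- s') glob_basis (existT _ M j) *+ c (existT _ M j)
      + \sum_(k <- s | projT1 k != M) glob_basis k *+ c k /\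
    forall k, k \in s -> projT1 k = M -> exists2 j, j \in s' & k = existT _ M j.
Proof.
move=> us; have [s' s'E] : exists s' : seq (Km M),
    [seq k <- s | projT1 k == M] = [seq existT _ M j : KK | j <- s'].
  elim: (s) => [|[m j] t [t' t'E]] /=; first by exists [::].
  by case: eqP => [mM|_]; [subst m; exists (j :: t'); rewrite /= t'E | exists t'].
exists s'; first by apply: (map_uniq (f := fun j : Km M => existT _ M j : KK)); rewrite -s'E filter_uniq.
split; first by rewrite (bigID (fun k : KK => projT1 k == M)) /= -big_filter s'E big_map.
move=> k ks kM; have : k \in ([seq k <- s | projT1 k == M] : seq KK).
  by rewrite mem_filter kM eqxx.
by rewrite s'E => /(@mapP (Km M) KK) [j js ->]; exists j.
Qed.

(* Induction on a bound M for the levels: the top-level part of the sum equals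
   minus the lower part, hence lies in G_(M-1) (resp. in G_(M-1) + U_M), and
   the level-M independence applies to it. *)
Lemma glob_indep M (s : seq KK) (c : KK -> nat) : uniq s ->
  (forall k, k \in s -> (projT1 k < M)%N) ->
  \sum_(k <- s) glob_basis k *+ c k = 0 -> forall k, k \in s -> (p ^ glob_lev k %| c k)%N.
Proof.
elim: M s c => [|M IH] s c us s_lt sum0 k ks; first by have := s_lt k ks.
have [s' us' [sum_split top_s]] := glob_split_top M c us.
set top := \sum_(j <- s') _ in sum_split; set low := \sum_(k <- s | projT1 k != M) _ in sum_split.
have G_low : GN M low.
  apply: glob_sum_Gn => k' /s_lt k'_lt k'M.
  by move: k'_lt; rewrite ltnS leq_eqVlt (negbTE k'M).
have G_top : GN M top.
  have -> : top = - low by apply/eqP; rewrite -addr_eq0 -sum_split sum0.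
  exact: (subgN (sgG M) G_low).
have p_top := level_indep (ltn0Sn M) (basis_b1 := b1P M) (b2P M) (c := fun j => c (existT _ M j)) us' G_top.
have [kM|kM] := eqVneq (projT1 k) M; first by have [j js ->] := top_s k ks kM; exact: p_top.
apply: (IH [seq k <- s | projT1 k != M] c); rewrite ?filter_uniq ?mem_filter ?kM //.
  by move=> k' /[!mem_filter] /andP [k'M /s_lt]; rewrite ltnS leq_eqVlt (negbTE k'M).
have top0 : top = 0.
  apply: big1_seq => j /andP [_ js]; have /dvdnP [m ->] := p_top j js.
  by rewrite mulnC mulrnA (Gn_exp p_prime cd (@glob_basis_Gn (existT _ M j))) mul0rn.
by rewrite big_filter -/low; move: sum0; rewrite sum_split top0 add0r.
Qed.

Lemma glob_U M (s : seq KK) (c : KK -> nat) : uniq s ->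
  (forall k, k \in s -> (projT1 k < M)%N) ->
  U (\sum_(k <- s) glob_basis k *+ c k) -> forall k, k \in s -> ~~ glob_full k -> (p %| c k)%N.
Proof.
elim: M s c => [|M IH] s c us s_lt sumU k ks; first by have := s_lt k ks.
have [s' us' [sum_split top_s]] := glob_split_top M c us.
set top := \sum_(j <- s') _ in sum_split; set low := \sum_(k <- s | projT1 k != M) _ in sum_split.
have G_low : GN M low.
  apply: glob_sum_Gn => k' /s_lt k'_lt k'M.
  by move: k'_lt; rewrite ltnS leq_eqVlt (negbTE k'M).
have GU_top : GUn M.+1 top.
  exists (- low), (\sum_(k <- s) glob_basis k *+ c k); split; first exact: (subgN (sgG M) G_low).
  split; last by rewrite sum_split addrC addrK.
  by split => //; apply: glob_sum_Gn => k' k's _; exact: s_lt.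
have p_top := level_indep_GUn (basis_b1 := b1P M) (b2P M) (c := fun j => c (existT _ M j)) us' GU_top.
have [kM|kM] := eqVneq (projT1 k) M.
  by have [[j|j] js ->] := top_s k ks kM; last by move=> _; exact: p_top.
apply: (IH [seq k <- s | projT1 k != M] c); rewrite ?filter_uniq ?mem_filter ?kM //.
  by move=> k' /[!mem_filter] /andP [k'M /s_lt]; rewrite ltnS leq_eqVlt (negbTE k'M).
have U_top : U top :=
  level_sum_U (sval (basis2 M)) (b1P M) (s := s') (c := fun j => c (existT _ M j)) p_top.
by rewrite big_filter -/low; move: (subgB sgU sumU U_top); rewrite sum_split addrAC subrr add0r.
Qed.

Lemma glob_span N x : GN N x -> exists l : seq (KK * nat), x = lincomb glob_basis l.
Proof.
elim: N x => [|N IH] x Gx; first by exists [::]; rewrite lincomb_nil (Gn0 cd Gx).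
have [l xl] := level_span (b1P N) (b2P N) Gx.
have [l' l'E] := IH _ xl.
exists (l' ++ [seq (existT _ N kc.1 : KK, kc.2) | kc <- l]).
by rewrite lincomb_cat -l'E {2}/lincomb big_map subrK.
Qed.

Lemma glob_cyclic_basis :
  cyclic_basis_mod (fun _ : G => True) (fun x : G => x = 0) p glob_lev glob_basis.
Proof.
split=> [//|k|x _|s c us sum0 k ks].
- exact: (Gn_exp p_prime cd (@glob_basis_Gn k)).
- have [N GNx] := Gn_bound cd x; have [l xl] := glob_span GNx.
  have [s [c [us ls]]] := lincomb_uniq (glob_basis : KK -> G) l.
  by exists s, c; rewrite xl ls subrr.
apply: (glob_indep (M := (\max_(k <- s) projT1 k).+1) us _ sum0 ks) => k' k's.
by rewrite ltnS; apply: leq_bigmax_seq.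
Qed.

Local Notation glob_coord := (coord (fun x : G => x = 0) p glob_lev glob_basis).

Lemma glob_pair_iso : pair_iso (fun _ : G => True) U p glob_lev glob_full.
Proof.
have p_gt1 := prime_gt1 p_prime; have lev_gt0 (k : KK) := ltn0Sn (projT1 k).
exists glob_coord.
apply: (coord_pair_iso p_gt1 lev_gt0 (subgroupT G) (subgroup0 G) glob_cyclic_basis) => //.
  split; first exact: subgroup0.
  by split; [exact: subgroupT | split => // x; split => // _; exact: addS_r (subgroup0 G) _].
move=> x _; have [s [us xs]] := coord_supp p_gt1 lev_gt0 (subgroup0 G) glob_cyclic_basis (x := x) Logic.I.
have /eqP := coord_expansion p_gt1 lev_gt0 (subgroup0 G) glob_cyclic_basis (x := x) Logic.I us xs.
rewrite subr_eq0 => /eqP xE; split.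
  move=> Ux k nk; case ks: (k \in s); last first.
    by case: (glob_coord x k =P 0) => [->|/xs]; rewrite ?dvdn0 ?ks.
  rewrite xE in Ux; apply: (glob_U (M := (\max_(k <- s) projT1 k).+1) us _ Ux ks nk) => k' k's.
  by rewrite ltnS; apply: leq_bigmax_seq.
move=> p_coord; rewrite xE; apply: (subg_sum sgU) => -[m [j|j]] _ /=.
  exact: (subgMn sgU) (level_basis_inl_U (sval (basis2 m)) (b1P m) j).
by have /dvdnP [q ->] := p_coord (existT _ m (inr j)) isT; rewrite mulrnA; exact: pU.
Qed.

End Global.
End Levels.

Theorem mainTheorem3 (p : nat) (G : zmodType) (U : G -> Prop)
  (I : Type) (e : I -> nat) (phi : G -> forall i : I, 'Z_(p ^ e i)%N) :
  prime p -> is_subgroup U -> (forall x : G, U (x *+ p)) ->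
  cyclic_decomp phi ->
  (forall n : nat, (0 < n)%N ->
     exists D E : G -> Prop,
       (forall x, E x -> D x) /\
       int_dsum (Gn phi n) (Gn phi n.-1) D /\
       int_dsum (fun x => U x /\ Gn phi n x) (fun x => U x /\ Gn phi n.-1 x) E /\
       forall J1 J2 : Type,
         Fp_dim p (addS (Gn phi n.-1) (fun x => U x /\ Gn phi n x))
                  (addS (Gn phi n.-1) (pmulS p (Gn phi n))) J1 ->
         Fp_dim p (Gn phi n) (addS (Gn phi n.-1) (fun x => U x /\ Gn phi n x)) J2 ->
         pair_iso D E p (fun _ : J1 + J2 => n) (fun k => if k is inl _ then true else false))
  /\
  (forall J1 J2 : nat -> Type,
     (forall n : nat, (0 < n)%N ->
        Fp_dim p (addS (Gn phi n.-1) (fun x => U x /\ Gn phi n x))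
                 (addS (Gn phi n.-1) (pmulS p (Gn phi n))) (J1 n) /\
        Fp_dim p (Gn phi n) (addS (Gn phi n.-1) (fun x => U x /\ Gn phi n x)) (J2 n)) ->
     pair_iso (fun _ : G => True) U p
       (fun k : {m : nat & (J1 m.+1 + J2 m.+1)%type} => (projT1 k).+1)
       (fun k => if projT2 k is inl _ then true else false)).
Proof.
move=> p_prime sgU pU cd; split=> [n n_gt0|J1 J2 dims]; last exact: (glob_pair_iso p_prime sgU pU cd dims).
have [J1' [b1' basis_b1']] := Fp_dim_exists p_prime (GpGn_subgroup cd n) (GUn_mulrn (U := U) cd (n := n)).
have [J2' [b2' basis_b2']] := Fp_dim_exists p_prime (GUn_subgroup sgU cd n) (Gn_mulrn_GUn pU cd (n := n)).
have D_dsum := level_complement_dsum p_prime sgU pU cd n_gt0 basis_b1' basis_b2'.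
have E_dsum := level_complementU_dsum p_prime sgU pU cd n_gt0 basis_b1' basis_b2'.
exists (level_complement b2' basis_b1'), (fun x => level_complement b2' basis_b1' x /\ U x).
split; first by move=> x [].
split => //; split => // J1 J2 [b1 basis_b1] [b2 basis_b2].
apply: (level_pair_iso p_prime sgU pU cd n_gt0 basis_b1 basis_b2 _ D_dsum E_dsum).
by move=> x [].
Qed.
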